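(* Let $p\le q$, let $\mathcal{E}(d)$ denote the Euclidean group (rigid motions) of $\mathbb{R}^d$, and let $X\subset\mathbb{R}^p$, $Y\subset\mathbb{R}^q$. Let $\mu=\sum_{i=1}^n a_i\delta_{x_i}$ be a discrete measure on $X$ and $\nu=\sum_{j=1}^m b_j\delta_{y_j}$ a discrete measure on $Y$, with $a\in\Delta_n$, $b\in\Delta_m$. Let $\mathcal{F}$ be a class of slicers $f:\mathbb{R}^q\to\mathbb{R}$ and $\mathcal{H}$ a class of measurable liftings $h:\mathbb{R}^p\to\mathbb{R}^q$, and assume they are stable under rigid motions: for all $(f,h)\in\mathcal{F}\times\mathcal{H}$, $g_X\in\mathcal{E}(p)$ and $g_Y\in\mathcal{E}(q)$, \[ f\circ g_Y^{-1}\in\mathcal{F},\qquad g_Y\circ h\circ g_X^{-1}\in\mathcal{H}. \] Then for all $g_X\in\mathcal{E}(p)$ and $g_Y\in\mathcal{E}(q)$, \[ \mathrm{min\text{-}GSGW}(g_{X\#}\mu,g_{Y\#}\nu)=\mathrm{min\text{-}GSGW}(\mu,\nu). \]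
   Context: $\Delta_n$ is the probability simplex in $\mathbb{R}^n$. For discrete measures $\mu=\sum_i a_i\delta_{x_i}$, $\nu=\sum_j b_j\delta_{y_j}$ in Euclidean spaces, let $C^X_{ii'}=\|x_i-x_{i'}\|$ and $C^Y_{jj'}=\|y_j-y_{j'}\|$ be the intra-space Euclidean distance matrices, let $\Pi(a,b)$ be the set of nonnegative $n\times m$ matrices with row sums $a$ and column sums $b$, and define the Gromov--Wasserstein loss \[ \mathcal{L}_{\mathrm{GW}}(\mu,\nu;\pi)=\sum_{i,i',j,j'}\bigl(C^X_{ii'}-C^Y_{jj'}\bigr)^2\pi_{ij}\pi_{i'j'}. \] For $(f,h)\in\mathcal{F}\times\mathcal{H}$, set the one-dimensional values $s_i=f(h(x_i))$ and $t_j=f(y_j)$. The lifted monotone plan $\pi^{\mathrm{mon}}_{f,h}\in\Pi(a,b)$ is obtained by computing the one-dimensional monotone (sorting-based, quantile) coupling between $\sum_i a_i\delta_{s_i}$ and $\sum_j b_j\delta_{t_j}$, where the atoms are indexed by $i$ and $j$ and sorted in nondecreasing order of their values (ties broken by a fixed deterministic rule depending only on the values and indices), and letting $(\pi^{\mathrm{mon}}_{f,h})_{ij}$ be the mass this coupling assigns to the pair of atoms $(s_i,t_j)$. The min Generalized Sliced Gromov--Wasserstein discrepancy is \[ \mathrm{min\text{-}GSGW}(\mu,\nu)=\inf_{f\in\mathcal{F},\,h\in\mathcal{H}}\mathcal{L}_{\mathrm{GW}}\bigl(\mu,\nu;\pi^{\mathrm{mon}}_{f,h}\bigr). \] $g_{\#}$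 denotes push-forward by $g$. *)

From HB Require Import structures.
From mathcomp Require Import all_boot all_order all_algebra.
From mathcomp Require Import all_classical all_reals.
Set Implicit Arguments. Unset Strict Implicit. Unset Printing Implicit Defensive.
Import Order.TTheory GRing.Theory Num.Theory.
Local Open Scope ring_scope.
Local Open Scope classical_set_scope.

Section Defs.
Variable R : realType.

Definition enorm (d : nat) (v : 'rV[R]_d) : R :=
  Num.sqrt (\sum_(k < d) (v 0 k) ^+ 2).

Definition in_simplex (n : nat) (a : 'I_n -> R) : Prop :=
  (forall i, 0 <= a i) /\ \sum_(i < n) a i = 1.

Definition orthogonal_mx (d : nat) (A : 'M[R]_d) : Prop := A *m A^T = 1%:M.
Definition rigid (d : nat) (A : 'M[R]_d) (b : 'rV[R]_d) : 'rV[R]_d -> 'rV[R]_d :=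
  fun x => x *m A + b.
Definition rigid_inv (d : nat) (A : 'M[R]_d) (b : 'rV[R]_d) : 'rV[R]_d -> 'rV[R]_d :=
  fun x => (x - b) *m A^T.

Definition distmx (d n : nat) (x : 'I_n -> 'rV[R]_d) (i i' : 'I_n) : R :=
  enorm (x i - x i').

Definition GW_loss (p q n m : nat) (x : 'I_n -> 'rV[R]_p) (y : 'I_m -> 'rV[R]_q)
  (pi : 'I_n -> 'I_m -> R) : R :=
  \sum_(i < n) \sum_(i' < n) \sum_(j < m) \sum_(j' < m)
    (distmx x i i' - distmx y j j') ^+ 2 * pi i j * pi i' j'.

Definition before (n : nat) (s : 'I_n -> R) (k i : 'I_n) : bool :=
  (s k < s i) || ((s k == s i) && (k < i)%N).

(* lower end of the quantile interval of atom i in the sorted order *)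
Definition cum_lo (n : nat) (a : 'I_n -> R) (s : 'I_n -> R) (i : 'I_n) : R :=
  \sum_(k < n | before s k i) a k.
Definition cum_hi (n : nat) (a : 'I_n -> R) (s : 'I_n -> R) (i : 'I_n) : R :=
  cum_lo a s i + a i.

(* one-dimensional monotone (quantile) coupling between sum_i a_i delta_{s_i}
   and sum_j b_j delta_{t_j}: mass assigned to (i,j) is the length of the
   overlap of their quantile intervals *)
Definition monotone_plan (n m : nat) (a : 'I_n -> R) (s : 'I_n -> R)
  (b : 'I_m -> R) (t : 'I_m -> R) (i : 'I_n) (j : 'I_m) : R :=
  Num.max 0 (Num.min (cum_hi a s i) (cum_hi b t j)
             - Num.max (cum_lo a s i) (cum_lo b t j)).

Definition lifted_plan (p q n m : nat) (a : 'I_n -> R) (x : 'I_n -> 'rV[R]_p)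
  (b : 'I_m -> R) (y : 'I_m -> 'rV[R]_q)
  (f : 'rV[R]_q -> R) (h : 'rV[R]_p -> 'rV[R]_q) : 'I_n -> 'I_m -> R :=
  monotone_plan a (fun i => f (h (x i))) b (fun j => f (y j)).

Definition min_GSGW (p q n m : nat) (a : 'I_n -> R) (x : 'I_n -> 'rV[R]_p)
  (b : 'I_m -> R) (y : 'I_m -> 'rV[R]_q)
  (F : set ('rV[R]_q -> R)) (H : set ('rV[R]_p -> 'rV[R]_q)) : R :=
  inf [set L | exists f h, F f /\ H h /\ L = GW_loss x y (lifted_plan a x b y f h)].

End Defs.

From HB Require Import structures.
From mathcomp Require Import all_boot all_order all_algebra.
From mathcomp Require Import all_classical all_reals.
Import Order.TTheory GRing.Theory Num.Theory.
Local Open Scope ring_scope.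
Local Open Scope classical_set_scope.
Set Implicit Arguments. Unset Strict Implicit.

(* The GW loss only sees the intra-space distance matrices, which rigid motions
   preserve; and conjugating a slicer/lifting pair (f, h) by the motions,
   (f o gY^-1, gY o h o gX^-1), leaves the sliced values f (h x_i) and f (y_j),
   hence the monotone plan, unchanged.  By the stability assumption this
   conjugation maps F x H into itself, in both directions, so both infima run
   over the same set of losses.  Neither p <= q nor the simplex constraints
   on a and b play any role. *)

Section RigidMotions.
Variables (R : realType) (d : nat).
Implicit Types (A : 'M[R]_d) (b u v : 'rV[R]_d) (g : 'rV[R]_d -> 'rV[R]_d).

Lemma orthogonal_mx_trC A : orthogonal_mx A -> A^T *m A = 1%:M.
Proof. exact: mulmx1C. Qed.

Lemma orthogonal_mx_tr A : orthogonal_mx A -> orthogonal_mx A^T.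
Proof. by move=> oA; rewrite /orthogonal_mx trmxK orthogonal_mx_trC. Qed.

Lemma rigidK A b : orthogonal_mx A -> cancel (rigid A b) (rigid_inv A b).
Proof. by move=> oA v; rewrite /rigid_inv /rigid addrK -mulmxA oA mulmx1. Qed.

Lemma rigid_invK A b : orthogonal_mx A -> cancel (rigid_inv A b) (rigid A b).
Proof.
by move=> /orthogonal_mx_trC oA v; rewrite /rigid_inv /rigid -mulmxA oA mulmx1 subrK.
Qed.

Lemma rigid_invE A b : rigid_inv A b = rigid A^T (- b *m A^T).
Proof. by apply: funext => v; rewrite /rigid /rigid_inv mulmxBl mulNmx. Qed.

Lemma rigidE A b : orthogonal_mx A -> rigid A b = rigid_inv A^T (- b *m A^T).
Proof.
move=> oA; apply: funext => v; rewrite /rigid /rigid_inv trmxK mulmxBl.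
by rewrite -mulmxA orthogonal_mx_trC // mulmx1 opprK.
Qed.

Lemma enorm_sqr_mx v : \sum_(k < d) v 0 k ^+ 2 = (v *m v^T) 0 0.
Proof. by rewrite mxE; apply: eq_bigr => k _; rewrite mxE expr2. Qed.

Lemma enorm_mulmx_orthogonal A v : orthogonal_mx A -> enorm (v *m A) = enorm v.
Proof. by move=> oA; rewrite /enorm !enorm_sqr_mx trmx_mul mulmxA -(mulmxA v) oA mulmx1. Qed.

Definition dist_preserving g : Prop :=
  forall u v, enorm (g u - g v) = enorm (u - v).

Lemma rigid_dist_preserving A b : orthogonal_mx A -> dist_preserving (rigid A b).
Proof.
move=> oA u v; rewrite /rigid -(enorm_mulmx_orthogonal (u - v) oA).
by rewrite mulmxBl opprD addrACA subrr addr0.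
Qed.

Lemma rigid_inv_dist_preserving A b : orthogonal_mx A -> dist_preserving (rigid_inv A b).
Proof. by move=> oA; rewrite rigid_invE; apply/rigid_dist_preserving/orthogonal_mx_tr. Qed.

Lemma distmx_comp k g (z : 'I_k -> 'rV[R]_d) :
  dist_preserving g -> distmx (g \o z) =2 distmx z.
Proof. by move=> gP i i'; exact: gP. Qed.

End RigidMotions.

Section Invariance.
Variables (R : realType) (p q n m : nat).
Variables (a : 'I_n -> R) (b : 'I_m -> R).
Implicit Types (x : 'I_n -> 'rV[R]_p) (y : 'I_m -> 'rV[R]_q).
Implicit Types (gX gXinv : 'rV[R]_p -> 'rV[R]_p) (gY gYinv : 'rV[R]_q -> 'rV[R]_q).
Implicit Types (f : 'rV[R]_q -> R) (h : 'rV[R]_p -> 'rV[R]_q).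
Implicit Types (F : set ('rV[R]_q -> R)) (H : set ('rV[R]_p -> 'rV[R]_q)).

Definition GSGW_losses x y F H : set R :=
  [set L | exists f h, F f /\ H h /\ L = GW_loss x y (lifted_plan a x b y f h)].

Lemma min_GSGWE x y F H : min_GSGW a x b y F H = inf (GSGW_losses x y F H).
Proof. by []. Qed.

Lemma GW_loss_comp gX gY x y pi : dist_preserving gX -> dist_preserving gY ->
  GW_loss (gX \o x) (gY \o y) pi = GW_loss x y pi.
Proof.
move=> gXP gYP; apply: eq_bigr => i _; apply: eq_bigr => i' _.
apply: eq_bigr => j _; apply: eq_bigr => j' _.
by rewrite (distmx_comp _ gXP) (distmx_comp _ gYP).
Qed.

Lemma lifted_plan_conj gX gXinv gY gYinv x y f h :
  cancel gX gXinv -> cancel gY gYinv ->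
  lifted_plan a (gX \o x) b (gY \o y) (f \o gYinv) (gY \o h \o gXinv) =
  lifted_plan a x b y f h.
Proof.
move=> gXK gYK; rewrite /lifted_plan; congr monotone_plan.
- by apply: funext => i /=; rewrite gXK gYK.
- by apply: funext => j /=; rewrite gYK.
Qed.

Lemma GSGW_losses_sub gX gXinv gY gYinv x y F H :
  dist_preserving gX -> dist_preserving gY -> cancel gX gXinv -> cancel gY gYinv ->
  (forall f h, F f -> H h -> F (f \o gYinv) /\ H (gY \o h \o gXinv)) ->
  GSGW_losses x y F H `<=` GSGW_losses (gX \o x) (gY \o y) F H.
Proof.
move=> gXP gYP gXK gYK stab L [f [h [Ff [Hh ->]]]].
have [Ff' Hh'] := stab f h Ff Hh.
exists (f \o gYinv), (gY \o h \o gXinv); do 2 split => //.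
by rewrite GW_loss_comp // lifted_plan_conj.
Qed.

End Invariance.

Theorem proposition2 (R : realType) (p q n m : nat) (hpq : (p <= q)%N)
  (a : 'I_n -> R) (x : 'I_n -> 'rV[R]_p) (b : 'I_m -> R) (y : 'I_m -> 'rV[R]_q)
  (ha : in_simplex a) (hb : in_simplex b)
  (F : set ('rV[R]_q -> R)) (H : set ('rV[R]_p -> 'rV[R]_q))
  (hstab : forall (f : 'rV[R]_q -> R) (h : 'rV[R]_p -> 'rV[R]_q)
             (AX : 'M[R]_p) (bX : 'rV[R]_p) (AY : 'M[R]_q) (bY : 'rV[R]_q),
             orthogonal_mx AX -> orthogonal_mx AY -> F f -> H h ->
             F (f \o rigid_inv AY bY) /\ H (rigid AY bY \o h \o rigid_inv AX bX)) :
  forall (AX : 'M[R]_p) (bX : 'rV[R]_p) (AY : 'M[R]_q) (bY : 'rV[R]_q),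
    orthogonal_mx AX -> orthogonal_mx AY ->
    min_GSGW a (rigid AX bX \o x) b (rigid AY bY \o y) F H = min_GSGW a x b y F H.
Proof.
move=> AX bX AY bY oX oY; rewrite !min_GSGWE; congr inf; apply/seteqP; split.
- have stab_inv f h : F f -> H h ->
      F (f \o rigid AY bY) /\ H (rigid_inv AY bY \o h \o rigid AX bX).
    rewrite (rigidE bX oX) (rigidE bY oY) (rigid_invE AY bY).
    by apply: hstab; apply: orthogonal_mx_tr.
  have xK : rigid_inv AX bX \o (rigid AX bX \o x) = x.
    by apply: funext => i /=; rewrite rigidK.
  have yK : rigid_inv AY bY \o (rigid AY bY \o y) = y.
    by apply: funext => j /=; rewrite rigidK.
  rewrite -{2}xK -{2}yK.
  apply: (GSGW_losses_sub (gXinv := rigid AX bX) (gYinv := rigid AY bY)) => //.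
  + exact: rigid_inv_dist_preserving.
  + exact: rigid_inv_dist_preserving.
  + exact: rigid_invK.
  + exact: rigid_invK.
- apply: (GSGW_losses_sub (gXinv := rigid_inv AX bX) (gYinv := rigid_inv AY bY)).
  + exact: rigid_dist_preserving.
  + exact: rigid_dist_preserving.
  + exact: rigidK.
  + exact: rigidK.
  + by move=> f h; apply: hstab.
Qed.
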